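(* Let $\mathbb{F}$ be a field, $d\geq1$ and $V$ a vector space over $\mathbb{F}$ of dimension $d+1$. Let $E^*_0,\dots,E^*_d$ be a system of mutually orthogonal idempotents in $\mathrm{End}(V)$ and $A\in\mathrm{End}(V)$ with $E^*_iAE^*_j=0$ if $|i-j|>1$ and $E^*_iAE^*_j\neq0$ if $|i-j|=1$. Assume $A$ is multiplicity-free and bipartite, with primitive idempotents $E_0,\dots,E_d$ and corresponding eigenvalues $\theta_0,\dots,\theta_d$. Let $\theta^*_0,\dots,\theta^*_d\in\mathbb{F}$ and $A^*=\sum_i\theta^*_iE^*_i$. If $(A;\{E_i\}_{i=0}^d;A^*;\{E^*_i\}_{i=0}^d)$ is a Leonard system, then for $0\le i\le d$, $\theta_i=0$ if and only if $d$ is even and $i=d/2$.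
   Context: A system of mutually orthogonal idempotents: $E^*_iE^*_j=\delta_{ij}E^*_i$, $\operatorname{rank}E^*_i=1$. $A$ multiplicity-free: $d+1$ distinct eigenvalues in $\mathbb{F}$; $E_i$ is the projection onto the $\theta_i$-eigenspace along the other eigenspaces. Bipartite: $\operatorname{tr}(E^*_iA)=0$ for all $i$. A Leonard system on $V$ is a sequence $(A;\{E_i\};A^*;\{E^*_i\})$ such that $A$ and $A^*$ are multiplicity-free, $E_0,\dots,E_d$ is an ordering of the primitive idempotents of $A$, $E^*_0,\dots,E^*_d$ is an ordering of the primitive idempotents of $A^*$, $E^*_iAE^*_j$ is $0$ if $|i-j|>1$ and nonzero if $|i-j|=1$, and $E_iA^*E_j$ is $0$ if $|i-j|>1$ and nonzero if $|i-j|=1$. *)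

(* End(V) for dim V = d+1 is modelled as 'M[F]_(d.+1). *)
From mathcomp Require Import all_boot all_order all_algebra.
Set Implicit Arguments. Unset Strict Implicit. Unset Printing Implicit Defensive.
Import GRing.Theory.
Local Open Scope ring_scope.

Section LS.
Variables (F : fieldType) (d : nat).
Local Notation M := 'M[F]_(d.+1).
Local Notation I := 'I_(d.+1).

Definition far (i j : I) : bool := (i.+1 < j)%N || (j.+1 < i)%N.
Definition adj (i j : I) : bool := (i.+1 == j :> nat) || (j.+1 == i :> nat).

Definition orth_idem_system (Es : I -> M) : Prop :=
  (forall i j, Es i *m Es j = if i == j then Es i else 0) /\
  (forall i, \rank (Es i) = 1%N).

Definition mult_free (A : M) : Prop :=
  exists th : I -> F, injective th /\ forall i, eigenvalue A (th i).

(* E_0..E_d are the primitive idempotents of A, E_i belonging to eigenvalue th_i: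
   E_i is the projection onto the th_i-eigenspace along the other eigenspaces. *)
Definition prim_idems (A : M) (E : I -> M) (th : I -> F) : Prop :=
  [/\ injective th,
      (forall i j, E i *m E j = if i == j then E i else 0),
      \sum_i E i = 1%:M,
      (forall i, A *m E i = th i *: E i) &
      (forall i, E i != 0) ].

Definition tridiag (Es : I -> M) (X : M) : Prop :=
  (forall i j, far i j -> Es i *m X *m Es j = 0) /\
  (forall i j, adj i j -> Es i *m X *m Es j != 0).

Definition bipartite (Es : I -> M) (A : M) : Prop :=
  forall i, \tr (Es i *m A) = 0.

Definition leonard_system (A : M) (E : I -> M) (As : M) (Es : I -> M) : Prop :=
  [/\ mult_free A /\ mult_free As,
      (exists th, prim_idems A E th),
      (exists ths, prim_idems As Es ths),
      tridiag Es A & tridiag E As ].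

End LS.

(* Let P and Q be the sums of the E*_i over even, resp. odd, i. Bipartiteness and
   tridiagonality make A swap the ranges of P and Q (P A P = Q A Q = 0), so the
   reflection D = P - Q satisfies D A D = -A, while D commutes with A*.
   Outside characteristic 2, conjugation by D sends E_i to the primitive idempotent
   of the eigenvalue -th_i, say E_(s i); as A* is tridiagonal with respect to the
   E_i, s is an automorphism of the path 0 - 1 - ... - d.  It is not the identity
   (that would force every th_i = 0), so s i = d - i, and th_i = 0 iff s i = i iff
   i = d/2.  In characteristic 2, P commutes with A^2, whose eigenvalues th_i^2 are
   still distinct, hence with every E_i; this forces every th_i = 0, which is
   impossible for d >= 1. *)

From mathcomp Require Import all_boot all_order all_algebra zify ring.
Set Implicit Arguments.
Unset Strict Implicit.
Unset Printing Implicit Defensive.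

Import GRing.Theory.
Local Open Scope ring_scope.

Lemma far_same_parity d (k l : 'I_d.+1) : odd k = odd l -> k != l -> far k l.
Proof.
rewrite /far -val_eqE /= => par_kl; apply: contraNT => near_kl.
have [[eq_l|eq_k]|/eqP//] : (l = k.+1 :> nat \/ k = l.+1 :> nat) \/ k = l :> nat.
  by lia.
- by rewrite eq_l /= in par_kl; case: odd par_kl.
- by rewrite eq_k /= in par_kl; case: odd par_kl.
Qed.

Lemma adj_neq d (k l : 'I_d.+1) : adj k l -> k != l.
Proof. rewrite /adj -val_eqE /=; lia. Qed.

Lemma adj_of_not_far d (k l : 'I_d.+1) : ~~ far k l -> k != l -> adj k l.
Proof. rewrite /adj /far -val_eqE /=; lia. Qed.

Lemma adj_rev_ord d (k l : 'I_d.+1) : adj (rev_ord k) (rev_ord l) = adj k l.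
Proof.
have := ltn_ord k; have := ltn_ord l; rewrite /adj /= !subSS.
by move=> lt_ld lt_kd; apply/idP/idP; lia.
Qed.

Lemma path_endo_increasing_id d (s : 'I_d.+1 -> 'I_d.+1) :
  (0 < d)%N -> injective s -> {homo s : i j / adj i j} ->
  (s (inord 0) < s (inord 1))%N -> s =1 id.
Proof.
move=> d_gt0 s_inj s_adj s_up.
pose f k := nat_of_ord (s (inord k)).
have f_inj k l : (k <= d)%N -> (l <= d)%N -> f k = f l -> k = l.
  by move=> le_kd le_ld /val_inj /s_inj /(congr1 val); rewrite /= !inordK.
have f_step k : (k < d)%N -> f k.+1 = (f k).+1 \/ (f k.+1).+1 = f k.
  move=> lt_kd; have := s_adj (inord k) (inord k.+1).
  rewrite /adj !inordK ?eqxx //; last exact: ltnW.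
  by case/(_ isT)/orP => /eqP; [left | right].
have f_up k : (k <= d)%N -> f k = (f 0%N + k)%N.
  elim/ltn_ind: k => -[|k] IH le_kd; first by rewrite addn0.
  have IHk := IH k (ltnSn k) (ltnW le_kd).
  case: (f_step k le_kd) => [-> | f_down]; first by rewrite IHk addnS.
  case: k => [|k] in IH IHk le_kd f_down *.
    by move: s_up; rewrite -/(f 0%N) -/(f 1%N); lia.
  have IHk' := IH k (leqW (ltnSn k)) (ltnW (ltnW le_kd)).
  suff : k = k.+2 by lia.
  by apply: f_inj; lia.
have f00 : f 0%N = 0%N.
  by have := f_up d (leqnn d); have := ltn_ord (s (inord d)); rewrite /f; lia.
move=> i; apply: val_inj => /=.
by have := f_up i (ltn_ord i); rewrite f00 /f inord_val.
Qed.

Lemma path_automorphism d (s : 'I_d.+1 -> 'I_d.+1) :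
  (0 < d)%N -> injective s -> {homo s : i j / adj i j} ->
  s =1 id \/ forall i, s i = rev_ord i.
Proof.
move=> d_gt0 s_inj s_adj.
have adj01 : adj (inord 0 : 'I_d.+1) (inord 1) by rewrite /adj !inordK.
have /orP[/eqP up | /eqP down] := s_adj _ _ adj01.
  by left; apply: path_endo_increasing_id => //; rewrite -up.
right=> i; rewrite -[s i]rev_ordK; congr rev_ord.
apply: (@path_endo_increasing_id _ (fun i => rev_ord (s i))) => //.
- exact: inj_comp rev_ord_inj s_inj.
- by move=> k l /s_adj; rewrite /= adj_rev_ord.
- by have := ltn_ord (s (inord 0)); rewrite /= -down; lia.
Qed.

Lemma rev_ord_fixed d (i : 'I_d.+1) : rev_ord i = i <-> ~~ odd d /\ (i : nat) = d./2.
Proof.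
have := ltn_ord i; have := odd_double_half d.
split=> [/(congr1 val) | fixed_i]; [|apply: val_inj]; rewrite /= subSS; lia.
Qed.

Lemma expr2_inj_char2 (F : fieldType) : 2 = 0 :> F -> injective (fun x : F => x ^+ 2).
Proof.
move=> two0 x y /eqP; rewrite -subr_eq0 => /eqP sq_xy; apply/eqP; rewrite -subr_eq0.
rewrite -sqrf_eq0.
have -> : (x - y) ^+ 2 = x ^+ 2 - y ^+ 2 + 2 * (y ^+ 2 - x * y) by ring.
by rewrite sq_xy two0 mul0r addr0.
Qed.

Lemma eqr_oppr_eq0 (F : fieldType) (x : F) : 2 != 0 :> F -> (x == - x) = (x == 0).
Proof.
by move=> two_nz; rewrite -addr_eq0 -mulr2n -mulr_natl mulf_eq0 (negbTE two_nz).
Qed.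

Lemma rank1_sandwich (F : fieldType) n (P X : 'M[F]_n) :
  \rank P = 1%N -> P *m X *m P = \tr (P *m X) *: P.
Proof.
move=> rkP; rewrite -(mulmx_base P); move: (col_base P) (row_base P).
rewrite rkP => c r.
have -> : c *m r *m X *m (c *m r) = c *m (r *m X *m c) *m r by rewrite !mulmxA.
have -> : \tr (c *m r *m X) = \tr (r *m X *m c) by rewrite -mulmxA mxtrace_mulC.
by rewrite [r *m X *m c]mx11_scalar mul_mx_scalar -scalemxAl mxtrace_scalar.
Qed.

Section OrthogonalFamily.
Variables (R : comPzRingType) (n : nat) (I : finType) (X : I -> 'M[R]_n).
Hypothesis X_orth : forall i j, X i *m X j = if i == j then X i else 0.

Lemma mulmx_orth_combr (a : I -> R) j : X j *m (\sum_i a i *: X i) = a j *: X j.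
Proof.
rewrite mulmx_sumr (bigD1 j) //= -scalemxAr X_orth eqxx big1 ?addr0 //.
by move=> i /negbTE ne_ij; rewrite -scalemxAr X_orth eq_sym ne_ij scaler0.
Qed.

Lemma mulmx_orth_comb (a b : I -> R) :
  (\sum_i a i *: X i) *m (\sum_i b i *: X i) = \sum_i (a i * b i) *: X i.
Proof.
rewrite mulmx_suml; apply: eq_bigr => i _.
by rewrite -scalemxAl mulmx_orth_combr scalerA.
Qed.

End OrthogonalFamily.

Section Reflection.
Variables (R : pzRingType) (n : nat) (P Q A : 'M[R]_n).
Hypotheses (PQ1 : P + Q = 1%:M) (PAP0 : P *m A *m P = 0) (QAQ0 : Q *m A *m Q = 0).

Lemma offdiag_split : A = P *m A *m Q + Q *m A *m P.
Proof.
transitivity ((P + Q) *m A *m (P + Q)); first by rewrite PQ1 mul1mx mulmx1.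
by rewrite !(mulmxDr, mulmxDl) PAP0 QAQ0 add0r addr0 addrC.
Qed.

Lemma reflection_conj_opp : (P - Q) *m A *m (P - Q) = - A.
Proof.
by rewrite {2}offdiag_split !(mulmxBr, mulmxBl) PAP0 QAQ0 sub0r subr0 opprD addrC.
Qed.

Lemma reflection_commute_sqr : P *m (A *m A) = A *m A *m P.
Proof.
have xPAP X : X *m P *m A *m P = 0 by rewrite -!mulmxA [P *m _]mulmxA PAP0 mulmx0.
have xQAQ X : X *m Q *m A *m Q = 0 by rewrite -!mulmxA [Q *m _]mulmxA QAQ0 mulmx0.
transitivity (P *m A *m Q *m A *m P).
  transitivity (P *m A *m (P + Q) *m A *m (P + Q)).
    by rewrite PQ1 mulmx1 mulmx1 mulmxA.
  by rewrite !(mulmxDr, mulmxDl) PAP0 !mul0mx !xQAQ !add0r addr0.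
transitivity ((P + Q) *m A *m (P + Q) *m A *m P); last by rewrite PQ1 mul1mx mulmx1.
by rewrite !(mulmxDr, mulmxDl) !xPAP QAQ0 !mul0mx !add0r addr0.
Qed.
End Reflection.

Section EigenIdempotents.
Variables (F : fieldType) (n : nat) (I : finType).
Variables (A : 'M[F]_n) (E : I -> 'M[F]_n) (th : I -> F).
Hypotheses (th_inj : injective th) (E_sum : \sum_i E i = 1%:M).
Hypothesis E_orth : forall i j, E i *m E j = if i == j then E i else 0.
Hypothesis AE : forall i, A *m E i = th i *: E i.

Lemma eigen_idem_expansion : A = \sum_i th i *: E i.
Proof.
by rewrite -[A]mulmx1 -E_sum mulmx_sumr; apply: eq_bigr => i _; apply: AE.
Qed.

Lemma eigen_idem_mulmx j : E j *m A = th j *: E j.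
Proof. by rewrite {1}eigen_idem_expansion mulmx_orth_combr. Qed.

Lemma eigen_idem_mulmx_eigen0 j (Y : 'M_n) mu :
  A *m Y = mu *: Y -> th j != mu -> E j *m Y = 0.
Proof.
move=> AY ne_mu; have : (th j - mu) *: (E j *m Y) = 0.
  by rewrite scalerBl scalemxAl -eigen_idem_mulmx -mulmxA AY -scalemxAr subrr.
by move/eqP; rewrite scaler_eq0 subr_eq0 (negbTE ne_mu) => /eqP.
Qed.

Lemma commute_eigen_idem (X : 'M_n) : A *m X = X *m A -> forall k, X *m E k = E k *m X.
Proof.
move=> AX k.
have XE0 i j : i != j -> E i *m (X *m E j) = 0.
  move=> ne_ij; apply: (@eigen_idem_mulmx_eigen0 i _ (th j)).
    by rewrite mulmxA AX -mulmxA AE scalemxAr.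
  by rewrite (inj_eq th_inj).
transitivity (E k *m X *m E k).
  rewrite -[X *m E k]mul1mx -E_sum mulmx_suml (bigD1 k) //= big1 ?addr0 ?mulmxA //.
  by move=> i; apply: XE0.
rewrite -[RHS]mulmx1 -E_sum mulmx_sumr (bigD1 k) //= big1 ?addr0 //.
by move=> j ne_jk; rewrite -mulmxA XE0 // eq_sym.
Qed.

Lemma eigen_idems_unique (G : I -> 'M_n) (mu : I -> F) :
  injective mu -> \sum_k G k = 1%:M -> (forall k, G k != 0) ->
  (forall k, A *m G k = mu k *: G k) ->
  exists s : I -> I, forall k, th (s k) = mu k /\ G k = E (s k).
Proof.
move=> mu_inj G_sum G_nz AG.
suff /fin_all_exists : forall k, exists j, th j = mu k /\ G k = E j by [].
move=> k.
have EG0 j l : th j != mu l -> E j *m G l = 0.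
  by move=> ne_jl; apply: eigen_idem_mulmx_eigen0.
have [j /eqP th_j | no_j] := pickP (fun j => th j == mu k); last first.
  case/negP: (G_nz k); rewrite -[G k]mul1mx -E_sum mulmx_suml big1 //.
  by move=> j _; apply: EG0; rewrite no_j.
exists j; split=> //.
transitivity (E j *m G k).
  rewrite -[LHS]mul1mx -E_sum mulmx_suml (bigD1 j) //= big1 ?addr0 //.
  by move=> i ne_ij; apply: EG0; rewrite -th_j (inj_eq th_inj).
rewrite -[RHS]mulmx1 -G_sum mulmx_sumr (bigD1 k) //= big1 ?addr0 //.
by move=> l ne_lk; apply: EG0; rewrite th_j (inj_eq mu_inj) eq_sym.
Qed.

Lemma eigenvalue0_of_commute_split (P Q : 'M_n) k :
  P + Q = 1%:M -> P *m Q = 0 -> Q *m P = 0 ->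
  P *m A *m P = 0 -> Q *m A *m Q = 0 -> P *m E k = E k *m P -> E k != 0 ->
  th k = 0.
Proof.
move=> PQ1 PQ0 QP0 PAP0 QAQ0 PE E_nz.
have QE : Q *m E k = E k *m Q.
  have -> : Q = 1%:M - P by rewrite -PQ1 addrC addKr.
  by rewrite mulmxBl mulmxBr mul1mx mulmx1 PE.
have block0 X : X *m A *m X = 0 -> X *m E k = E k *m X -> th k *: (X *m E k *m X) = 0.
  move=> XAX XE; rewrite scalemxAl scalemxAr -AE.
  by rewrite mulmxA -[_ *m A *m _ *m X]mulmxA -XE mulmxA XAX mul0mx.
have E_split : E k = P *m E k *m P + Q *m E k *m Q.
  transitivity ((P + Q) *m E k *m (P + Q)); first by rewrite PQ1 mul1mx mulmx1.
  have cross (X Y : 'M_n) : X *m E k = E k *m X -> X *m Y = 0 -> X *m E k *m Y = 0.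
    by move=> XE XY; rewrite XE -mulmxA XY mulmx0.
  by rewrite !(mulmxDl, mulmxDr) (cross Q P) ?(cross P Q) // addr0 add0r.
have : th k *: E k = 0 by rewrite E_split scalerDr !block0 ?addr0.
by move/eqP; rewrite scaler_eq0 (negbTE E_nz) orbF => /eqP.
Qed.

End EigenIdempotents.

Section ReflectedLeonardPair.
Variables (F : fieldType) (d : nat) (E : 'I_d.+1 -> 'M[F]_d.+1) (th : 'I_d.+1 -> F).
Variables (A As D : 'M[F]_d.+1).
Hypotheses (th_inj : injective th) (E_sum : \sum_i E i = 1%:M).
Hypothesis E_orth : forall i j, E i *m E j = if i == j then E i else 0.
Hypotheses (AE : forall i, A *m E i = th i *: E i) (E_nz : forall i, E i != 0).
Hypothesis As_far : forall i j, far i j -> E i *m As *m E j = 0.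
Hypothesis As_adj : forall i j, adj i j -> E i *m As *m E j != 0.
Hypotheses (DD1 : D *m D = 1%:M) (DAD : D *m A *m D = - A) (DAsD : D *m As *m D = As).

Lemma reflection_path_automorphism :
  exists s, [/\ injective s, {homo s : i j / adj i j} & forall k, th (s k) = - th k].
Proof.
pose G k := D *m E k *m D.
have conjK X : D *m (D *m X *m D) *m D = X.
  by rewrite !mulmxA DD1 mul1mx -mulmxA DD1 mulmx1.
have AD : A *m D = - (D *m A).
  by rewrite -[A *m D]mul1mx -DD1 -mulmxA [D *m (A *m D)]mulmxA DAD mulmxN.
have AG k : A *m G k = - th k *: G k.
  by rewrite /G !mulmxA AD !mulNmx -(mulmxA D A) AE -scalemxAr -scalemxAl scaleNr.
have G_sum : \sum_k G k = 1%:M by rewrite -mulmx_suml -mulmx_sumr E_sum mulmx1 DD1.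
have G_nz k : G k != 0.
  by apply: contraNneq (E_nz k) => G0; rewrite -(conjK (E k)) -/(G k) G0 mulmx0 mul0mx.
have oppth_inj : injective (fun k => - th k) by move=> a b /oppr_inj /th_inj.
have [s sP] := eigen_idems_unique th_inj E_sum E_orth AE oppth_inj G_sum G_nz AG.
have s_inj : injective s.
  by move=> a b /(congr1 th); rewrite (sP a).1 (sP b).1 => /oppth_inj.
exists s; split=> // [a b adj_ab | k]; last by case: (sP k).
apply: adj_of_not_far; last by rewrite (inj_eq s_inj) adj_neq.
apply: contra (As_adj adj_ab) => /As_far; rewrite -(sP a).2 -(sP b).2 /G.
have -> : D *m E a *m D *m As *m (D *m E b *m D) = D *m (E a *m As *m E b) *m D.
  have DDK X : X *m D *m D = X by rewrite -mulmxA DD1 mulmx1.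
  by rewrite -{1}DAsD !mulmxA !DDK.
by move=> conj0; rewrite -[E a *m As *m E b]conjK conj0 mulmx0 mul0mx.
Qed.

End ReflectedLeonardPair.

Lemma char2_offdiag_eigenvalues0 (F : fieldType) n (I : finType)
    (A P Q : 'M[F]_n) (E : I -> 'M[F]_n) (th : I -> F) :
  2 = 0 :> F -> injective th -> \sum_i E i = 1%:M ->
  (forall i j, E i *m E j = if i == j then E i else 0) ->
  (forall i, A *m E i = th i *: E i) -> (forall i, E i != 0) ->
  P + Q = 1%:M -> P *m Q = 0 -> Q *m P = 0 ->
  P *m A *m P = 0 -> Q *m A *m Q = 0 -> forall k, th k = 0.
Proof.
move=> two0 th_inj E_sum E_orth AE E_nz PQ1 PQ0 QP0 PAP0 QAQ0 k.
apply: (eigenvalue0_of_commute_split AE PQ1) => //.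
have AAE i : A *m A *m E i = th i ^+ 2 *: E i.
  by rewrite -mulmxA AE -scalemxAr AE scalerA expr2.
have th2_inj : injective (fun i => th i ^+ 2).
  by move=> i j /(expr2_inj_char2 two0) /th_inj.
apply: (commute_eigen_idem th2_inj E_sum E_orth AAE).
by rewrite (reflection_commute_sqr PQ1 PAP0 QAQ0).
Qed.

Section ParitySplit.
Variables (F : fieldType) (d : nat) (Es : 'I_d.+1 -> 'M[F]_d.+1).
Hypothesis Es_orth : forall i j, Es i *m Es j = if i == j then Es i else 0.

Definition parity_part (b : bool) := \sum_(k < d.+1) (odd k == b)%:R *: Es k.

Lemma parity_part_sum : \sum_k Es k = 1%:M ->
  parity_part false + parity_part true = 1%:M.
Proof.
move=> <-; rewrite -big_split /=; apply: eq_bigr => k _.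
by rewrite -scalerDl; case: odd; rewrite /= ?add0r ?addr0 scale1r.
Qed.

Lemma parity_part_mul b c :
  parity_part b *m parity_part c = if b == c then parity_part b else 0.
Proof.
rewrite mulmx_orth_comb //; case: eqP => [<- | /eqP ne_bc].
  by apply: eq_bigr => k _; case: eqP; rewrite ?mulr1 ?mulr0.
rewrite big1 // => k _; case: eqP => [odd_k | _]; last by rewrite mul0r scale0r.
by rewrite odd_k (negbTE ne_bc) mulr0 scale0r.
Qed.

Lemma parity_part_commute b (c : 'I_d.+1 -> F) :
  parity_part b *m (\sum_k c k *: Es k) = (\sum_k c k *: Es k) *m parity_part b.
Proof. by rewrite !mulmx_orth_comb //; apply: eq_bigr => k _; rewrite mulrC. Qed.

Lemma parity_part_block0 (A : 'M[F]_d.+1) :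
  (forall i, \rank (Es i) = 1%N) -> (forall i j, far i j -> Es i *m A *m Es j = 0) ->
  (forall i, \tr (Es i *m A) = 0) ->
  forall b, parity_part b *m A *m parity_part b = 0.
Proof.
move=> Es_rk1 A_far A_bip b; rewrite !mulmx_suml big1 // => k _.
rewrite mulmx_sumr big1 // => l _; rewrite -scalemxAl -!scalemxAr -scalemxAl scalerA.
have [<- | ne_kl] := eqVneq k l.
  by rewrite rank1_sandwich // A_bip !scale0r scaler0.
have [/eqP kb | _] := boolP (odd k == b); last by rewrite mulr0 scale0r.
have [/eqP lb | _] := boolP (odd l == b); last by rewrite mul0r scale0r.
by rewrite A_far ?scaler0 // far_same_parity // kb lb.
Qed.

Definition parity_reflection := parity_part false - parity_part true.

Lemma parity_reflection_sqr :
  \sum_k Es k = 1%:M -> parity_reflection *m parity_reflection = 1%:M.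
Proof.
move=> /parity_part_sum <-.
by rewrite mulmxBl !mulmxBr !parity_part_mul /= subr0 sub0r opprK.
Qed.

Lemma parity_reflection_conj_comb (c : 'I_d.+1 -> F) : \sum_k Es k = 1%:M ->
  parity_reflection *m (\sum_k c k *: Es k) *m parity_reflection = \sum_k c k *: Es k.
Proof.
move=> Es_sum; rewrite mulmxBl !parity_part_commute -mulmxBr -mulmxA.
by rewrite parity_reflection_sqr // mulmx1.
Qed.

End ParitySplit.

Theorem corollary11p3 (F : fieldType) (d : nat) (hd : (1 <= d)%N)
  (Es : 'I_(d.+1) -> 'M[F]_(d.+1)) (A : 'M[F]_(d.+1))
  (E : 'I_(d.+1) -> 'M[F]_(d.+1)) (th ths : 'I_(d.+1) -> F) :
  orth_idem_system Es ->
  tridiag Es A ->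
  mult_free A ->
  bipartite Es A ->
  prim_idems A E th ->
  leonard_system A E (\sum_i ths i *: Es i) Es ->
  forall i : 'I_(d.+1), th i = 0 <-> (~~ odd d /\ (i : nat) = d./2).
Proof.
move=> [Es_orth Es_rk1] [A_far _] _ A_bip [th_inj E_orth E_sum AE E_nz].
move=> [_ _ [? [_ _ Es_sum _ _]] _ [As_far As_adj]].
have PQ1 := parity_part_sum Es_sum.
have P_mul := parity_part_mul Es_orth.
have PAP0 := parity_part_block0 Es_rk1 A_far A_bip.
have th_not0 : ~ (forall k, th k = 0).
  move=> th0; have /th_inj/(congr1 val)/= : th ord0 = th ord_max by rewrite !th0.
  lia.
have [two0 | two_nz] := eqVneq (2 : F) 0.
  case: th_not0; apply: (char2_offdiag_eigenvalues0 two0 th_inj E_sum E_orth AE E_nz PQ1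
    (P_mul false true) (P_mul true false) (PAP0 false) (PAP0 true)).
have [s [s_inj s_adj s_th]] := reflection_path_automorphism th_inj E_sum E_orth AE E_nz
  As_far As_adj (parity_reflection_sqr Es_orth Es_sum)
  (reflection_conj_opp PQ1 (PAP0 false) (PAP0 true))
  (parity_reflection_conj_comb Es_orth ths Es_sum).
have th0_fixed k : th k = 0 <-> s k = k.
  split=> [th0 | s_k]; first by apply: th_inj; rewrite s_th th0 oppr0.
  by apply/eqP; rewrite -eqr_oppr_eq0 // -s_th s_k.
case: (path_automorphism hd s_inj s_adj) => [s_id | s_rev].
  by case: th_not0 => k; apply/th0_fixed/s_id.
by move=> i; rewrite th0_fixed s_rev rev_ord_fixed.
Qed.
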